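(* Let $p\geq 2$ be an integer (not necessarily prime) and $r\in\{1,\ldots,p-1\}$. Define integers $D_{p,r}(n)$ by $$\prod_{i=0}^{\infty}\big(1-x^{p^{i}}\big)^{r}=\sum_{n=0}^{\infty}D_{p,r}(n)x^{n}.$$ Then for every $n\in\mathbb{N}$, $$D_{p,r}(n)=\prod_{i=0}^{p-1}(-1)^{iN_{p}(i,n)}\binom{r}{i}^{N_{p}(i,n)},$$ with the conventions $\binom{a}{b}=0$ for $b>a$ and $0^{0}=1$. Moreover, for every $j\in\{0,\ldots,p-1\}$ and every positive integer $n$, $$D_{p,r}(pn+j)=(-1)^{j}\binom{r}{j}D_{p,r}(n).$$
   Context: For integers $p\geq 2$, $n\geq 0$ and $i\in\{0,\ldots,p-1\}$, $N_p(i,n)$ denotes the number of digits equal to $i$ in the (unique) base-$p$ expansion $n=\sum_{j}\varepsilon_j p^j$, $\varepsilon_j\in\{0,\ldots,p-1\}$ (with $N_p(i,0)=0$). *)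

From mathcomp Require Import all_boot all_order all_algebra.
Set Implicit Arguments. Unset Strict Implicit. Unset Printing Implicit Defensive.
Import GRing.Theory Num.Theory.
Local Open Scope ring_scope.

(* The digits of n >= 1 are eps_j = (n %/ p^j) %% p for the positions j with
   p^j <= n (all such j are < n when p >= 2); N_p(i,0) = 0. *)
Definition Ndig (p i n : nat) : nat :=
  count (fun j => (p ^ j <= n)%N && ((n %/ p ^ j) %% p == i)%N) (iota 0 n).

(* D_{p,r}(n): coefficient of x^n in prod_{i>=0} (1 - x^{p^i})^r.  For p >= 2,
   the factors with i > n are 1 mod x^{n+1}, so the coefficient of x^n equals
   that of the finite product over i <= n. *)
Definition D (p r n : nat) : int :=
  (\prod_(i < n.+1) (1 - 'X^(p ^ i)) ^+ r : {poly int})`_n.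

From mathcomp Require Import all_boot all_order all_algebra.
From mathcomp Require Import zify.

Set Implicit Arguments.
Unset Strict Implicit.
Unset Printing Implicit Defensive.
Import GRing.Theory Num.Theory.
Local Open Scope ring_scope.

(* For a polynomial a of degree < p with a_0 = 1, the partial products
   F_N(x) = prod_(i < N) a(x^(p^i)) satisfy F_(N+1)(x) = a(x) F_N(x^p), so the
   coefficient of x^(p m + j) in F_(N+1) is a_j times the coefficient of x^m
   in F_N: the coefficient of x^n is the product of a_e over the base-p digits
   e of n.  For a = (1 - x)^r with r < p, a_e = (-1)^e C(r, e). *)

Definition Ndig_upto (p i L n : nat) : nat :=
  count (fun j => (p ^ j <= n)%N && ((n %/ p ^ j) %% p == i)%N) (iota 0 L).

Lemma Ndig_upto_stable p i L1 L2 n : (0 < p)%N -> (n < p ^ L1)%N ->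
  (L1 <= L2)%N -> Ndig_upto p i L1 n = Ndig_upto p i L2 n.
Proof.
move=> p_gt0 n_lt hL; rewrite /Ndig_upto -(subnKC hL) iotaD count_cat add0n.
rewrite [X in (_ + X)%N](eq_in_count (a2 := pred0)) ?count_pred0 ?addn0 // => k.
rewrite mem_iota => /andP[Lk _] /=; apply/negbTE; rewrite negb_and -ltnNge.
by rewrite (leq_trans n_lt) // leq_pexp2l.
Qed.

Lemma Ndig_upto_S p i L n : (0 < p)%N -> (0 < n)%N ->
  Ndig_upto p i L.+1 n = ((n %% p == i) + Ndig_upto p i L (n %/ p))%N.
Proof.
move=> p_gt0 n_gt0; rewrite /Ndig_upto /= expn0 divn1 n_gt0; congr (_ + _)%N.
rewrite -[1%N]/(1 + 0)%N iotaDl count_map; apply: eq_count => k /=.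
by rewrite add1n expnS divnMA leq_divRL ?expn_gt0 ?p_gt0 // mulnC.
Qed.

Lemma Ndig_divn p i n : (1 < p)%N -> (0 < n)%N ->
  Ndig p i n = ((n %% p == i) + Ndig p i (n %/ p))%N.
Proof.
move=> p_gt1 n_gt0; have p_gt0 : (0 < p)%N by lia.
rewrite -[Ndig p i n]/(Ndig_upto p i n n).
rewrite -[Ndig p i (n %/ p)]/(Ndig_upto p i (n %/ p) (n %/ p)).
rewrite (@Ndig_upto_stable p i n n.+1) ?(ltn_expl n p_gt1) // Ndig_upto_S //.
by rewrite (@Ndig_upto_stable p i (n %/ p) n) ?(ltn_expl _ p_gt1) ?leq_div.
Qed.

Lemma Ndig_MD p i m j : (1 < p)%N -> (j < p)%N -> (0 < p * m + j)%N ->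
  Ndig p i (p * m + j) = ((j == i) + Ndig p i m)%N.
Proof.
move=> p_gt1 j_lt n_gt0; rewrite Ndig_divn // mulnC modnMDl modn_small //.
by rewrite divnMDl ?(ltn_trans _ p_gt1) // divn_small // addn0.
Qed.

Definition digit_prod (R : comNzRingType) (w : nat -> R) (p n : nat) : R :=
  \prod_(i < p) w i ^+ Ndig p i n.

Lemma digit_prodMD (R : comNzRingType) (w : nat -> R) p m j :
  w 0%N = 1 -> (1 < p)%N -> (j < p)%N ->
  digit_prod w p (p * m + j) = w j * digit_prod w p m.
Proof.
move=> w0 p_gt1 j_lt; have [/eqP|n_gt0] := posnP (p * m + j).
  rewrite addn_eq0 muln_eq0 (negbTE (lt0n_neq0 (ltnW p_gt1))) /=.
  by case/andP => /eqP -> /eqP ->; rewrite muln0 w0 mul1r.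
rewrite /digit_prod.
under eq_bigr => i _ do rewrite Ndig_MD // exprD.
rewrite big_split /= (bigD1 (Ordinal j_lt)) //= eqxx expr1.
by rewrite big1 ?mulr1 // => i; rewrite -val_eqE eq_sym => /negbTE ->.
Qed.

Lemma coefM_comp_poly_Xn (R : nzSemiRingType) (a b : {poly R}) p m j :
  (size a <= p)%N -> (j < p)%N -> (a * (b \Po 'X^p))`_(p * m + j) = a`_j * b`_m.
Proof.
move=> size_a j_lt; have p_gt0 : (0 < p)%N by lia.
have j_le : (j < (p * m + j).+1)%N by rewrite ltnS leq_addl.
rewrite coefM (bigD1 (Ordinal j_le)) //= big1 ?addr0.
  by rewrite coef_comp_poly_Xn // addnK dvdn_mulr // mulKn.
move=> [k /= k_le] /eqP ne_kj; rewrite coef_comp_poly_Xn //.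
have [k_ge|k_lt] := leqP p k.
  by rewrite nth_default ?mul0r ?(leq_trans size_a).
case: ifP => [dvd|_]; last by rewrite mulr0.
have := dvd; rewrite -eqn_mod_dvd // mulnC modnMDl !modn_small // => /eqP jk.
by case: ne_kj; apply: val_inj.
Qed.

Lemma coef_prod_comp_poly_Xn (R : comNzRingType) (a : {poly R}) p N n :
  a`_0 = 1 -> (1 < p)%N -> (size a <= p)%N -> (n < p ^ N)%N ->
  (\prod_(i < N) (a \Po 'X^(p ^ i)))`_n = digit_prod (nth 0 a) p n.
Proof.
move=> a0 p_gt1 size_a; elim: N n => [|N IHN] n n_lt.
  have -> : n = 0%N by rewrite expn0 in n_lt; lia.
  by rewrite big_ord0 coef1 /digit_prod big1.
have prodS : \prod_(i < N.+1) (a \Po 'X^(p ^ i))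
    = a * ((\prod_(i < N) (a \Po 'X^(p ^ i))) \Po 'X^p).
  rewrite big_ord_recl expn0 comp_polyXr rmorph_prod; congr (_ * _).
  apply: eq_bigr => i _.
  by rewrite /= -comp_polyA comp_Xn_poly -exprM /bump add1n expnS.
have p_gt0 : (0 < p)%N by lia.
have n_mod_lt : (n %% p < p)%N by rewrite ltn_mod.
have n_div_lt : (n %/ p < p ^ N)%N by rewrite ltn_divLR // -expnSr.
rewrite (divn_eq n p) mulnC prodS coefM_comp_poly_Xn // IHN //.
by rewrite digit_prodMD.
Qed.

Lemma coef_1subX_exp (R : nzRingType) r i :
  ((1 - 'X) ^+ r : {poly R})`_i = (-1) ^+ i * 'C(r, i)%:R.
Proof.
rewrite (exprBn_comm _ (commr_sym (commr1 _))) coef_sum.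
under eq_bigr => k _ do
  rewrite expr1n mulr1 coefMn -polyCN -rmorphXn coefCM coefXn.
have [i_le|i_gt] := ltnP i r.+1.
  rewrite (bigD1 (Ordinal i_le)) //= eqxx mulr1 big1 ?addr0 ?mulr_natr //.
  by move=> k; rewrite -val_eqE eq_sym => /negbTE ->; rewrite mulr0 mul0rn.
rewrite bin_small // mulr0 big1 // => k _.
by rewrite gtn_eqF ?mulr0 ?mul0rn // (leq_trans (ltn_ord k)).
Qed.

Lemma size_1subX_exp (R : nzRingType) r :
  (size ((1 - 'X) ^+ r : {poly R}) <= r.+1)%N.
Proof.
apply: leq_trans (size_poly_exp_leq _ _) _.
by rewrite -opprB size_polyN -polyC1 size_XsubC mul1n.
Qed.

Theorem lemma2p1 (p r : nat) (hp : (2 <= p)%N) (hr1 : (1 <= r)%N) (hrp : (r <= p - 1)%N) :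
  (forall n : nat,
     D p r n = \prod_(i < p) ((-1) ^+ (i * Ndig p i n) * ('C(r, i)%:Z) ^+ (Ndig p i n)))
  /\
  (forall j n : nat, (j <= p - 1)%N -> (0 < n)%N ->
     D p r (p * n + j) = (-1) ^+ j * ('C(r, j)%:Z) * D p r n).
Proof.
pose a : {poly int} := (1 - 'X) ^+ r.
have a0 : a`_0 = 1 by rewrite /a coef_1subX_exp expr0 bin0 mul1r.
have D_digit_prod n : D p r n = digit_prod (nth 0 a) p n.
  have comp_a k : a \Po 'X^k = (1 - 'X^k) ^+ r.
    by rewrite rmorphXn rmorphB /= comp_polyX rmorph1.
  rewrite /D; under eq_bigr => i _ do rewrite -comp_a.
  rewrite coef_prod_comp_poly_Xn //.
  - by rewrite (leq_trans (size_1subX_exp _ _)) //; lia.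
  - by rewrite (ltn_trans (ltn_expl n hp)) // ltn_exp2l.
split=> [n | j n j_le _].
  rewrite D_digit_prod; apply: eq_bigr => i _.
  by rewrite /a coef_1subX_exp natz exprMn -exprM.
have j_lt : (j < p)%N by lia.
by rewrite !D_digit_prod digit_prodMD // /a coef_1subX_exp natz.
Qed.
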